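(* Let $\theta\ge0$, $\omega\in\mathbb R$, $a\in\mathbb R$. For every polynomial $f$, $$\bigl(\exp(a\Delta_{\theta,\omega})f\bigr)(z)=\bigl(\exp(\omega^{-1}(e^{a\omega}-1)\Delta_\theta)f\bigr)(e^{a\omega}z),$$ where all operator exponentials are defined by their (here finite) power series; i.e. $\exp(a\Delta_{\theta,\omega})=\exp(a\omega zD)\exp(\omega^{-1}(e^{a\omega}-1)\Delta_\theta)$ on polynomials.
   Context: $D=d/dz$, $\Delta_{\theta,\omega}=(\theta+\omega z)D+zD^2$, $\Delta_\theta=(\theta+zD)D$; $\exp(\gamma A)f=\sum_{k\ge0}\frac{\gamma^k}{k!}A^kf$, and $\exp(\gamma zD)f(z)=f(e^\gamma z)$. For $\omega=0$, $\omega^{-1}(e^{a\omega}-1)$ means $a$. *)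

From HB Require Import structures.
From mathcomp Require Import all_boot all_order all_algebra.
From mathcomp Require Import all_classical all_reals all_analysis.
Set Implicit Arguments. Unset Strict Implicit. Unset Printing Implicit Defensive.
Import Order.TTheory GRing.Theory Num.Theory.
Import numFieldNormedType.Exports.
Local Open Scope classical_set_scope.
Local Open Scope ring_scope.

Definition Delta_thom (R : realType) (th om : R) (f : {poly R}) : {poly R} :=
  (th%:P + om *: 'X) * f^`() + 'X * f^`(2).

Definition Delta_th (R : realType) (th : R) (f : {poly R}) : {poly R} :=
  th *: f^`() + 'X * f^`(2).

Definition exp_partial (R : realType) (A : {poly R} -> {poly R}) (g : R)
  (f : {poly R}) (N : nat) : {poly R} :=
  \sum_(k < N) ((g ^+ k) / (k`!)%:R) *: iter k A f.

(* exp(gamma A) f = h : the power series converges (coefficientwise) to h *)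
Definition op_exp_series (R : realType) (A : {poly R} -> {poly R}) (g : R)
  (f h : {poly R}) : Prop :=
  forall i : nat, (fun N => (exp_partial A g f N)`_i) @ \oo --> h`_i.

(* omega^{-1}(e^{a omega} - 1), read as a when omega = 0 *)
Definition expcoef (R : realType) (om a : R) : R :=
  if om == 0 then a else om^-1 * (expR (a * om) - 1).

(* Write L := Delta_th and E := zD.  Then Delta_{th,om} = om E + L and [E, L] = -L,
   so for om s = 1 conjugation by exp(s L) turns Delta_{th,om} into om E: the
   polynomials exp(s L) z^m are eigenvectors of Delta_{th,om} with eigenvalue om m,
   and on them exp(a Delta_{th,om}) acts by e^{a om m}.  Expanding
   f = exp(s L) g with g = exp(-s L) f, and moving the dilation z -> e^{a om} z
   through exp(s L) by means of L(u(l z)) = l (L u)(l z), turns the right-hand side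
   into exp(s (e^{a om} - 1) L) f evaluated at e^{a om} z.  Since L lowers the degree,
   every series in L is a finite sum. *)

From HB Require Import structures.
From mathcomp Require Import all_boot all_order all_algebra.
From mathcomp Require Import all_classical all_reals all_analysis.
From mathcomp Require Import ring.
Set Implicit Arguments. Unset Strict Implicit.
Import Order.TTheory GRing.Theory Num.Theory.
Local Open Scope ring_scope.

Section IterLinear.
Variables (R : pzRingType) (V : lmodType R) (A : {linear V -> V}).

Fact iter_is_linear k : linear (iter k A).
Proof. by elim: k => [|k IH] c u v //=; rewrite IH linearP. Qed.
HB.instance Definition _ k :=
  GRing.isLinear.Build R V V _ (iter k A) (iter_is_linear k).

Lemma iter_eq0_ge m n (u : V) : iter m A u = 0 -> (m <= n)%N -> iter n A u = 0.
Proof. by move=> Au0 /subnK <-; rewrite iterD Au0 linear0. Qed.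

End IterLinear.

Lemma fact_natr_neq0 (R : numDomainType) n : (n`!%:R : R) != 0.
Proof. by rewrite pnatr_eq0 -lt0n fact_gt0. Qed.

Lemma exp_coeffD (R : realType) (s t : R) n :
  exp_coeff (s + t) n = \sum_(i < n.+1) exp_coeff s i * exp_coeff t (n - i)%N.
Proof.
rewrite /exp_coeff /= addrC exprDn mulr_suml; apply: eq_bigr => i _.
have le_in : (i <= n)%N by rewrite -ltnS.
have nfact : (n`!%:R : R) = 'C(n, i)%:R * (i`!%:R * (n - i)`!%:R).
  by rewrite -!natrM bin_fact.
have binC : ('C(n, i)%:R : R) != 0 by rewrite pnatr_eq0 -lt0n bin_gt0.
by rewrite nfact -mulr_natr; field; rewrite binC !fact_natr_neq0.
Qed.

Lemma big_nat_triangle (V : nmodType) N (G : nat -> nat -> V) :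
  \sum_(0 <= n < N) \sum_(0 <= i < n.+1) G i (n - i)%N =
  \sum_(0 <= k < N) \sum_(0 <= j < N - k) G k j.
Proof.
elim: N => [|N IH]; first by rewrite !big_geq.
rewrite big_nat_recr //= IH [RHS]big_nat_recr //= subSnn big_nat1.
rewrite big_nat_recr //= subnn addrA -big_split; congr (_ + _).
apply: eq_big_nat => k /andP[_ ltkN] /=.
by rewrite subSn 1?ltnW // big_nat_recr.
Qed.

Section ExpPartial.
Variables (R : realType) (A : {linear {poly R} -> {poly R}}).
Implicit Types (s t c : R) (u v : {poly R}).

Lemma exp_partialE s u N :
  exp_partial A s u N = \sum_(k < N) exp_coeff s k *: iter k A u.
Proof. by []. Qed.

Lemma exp_partialD N s u v :
  exp_partial A s (u + v) N = exp_partial A s u N + exp_partial A s v N.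
Proof. by rewrite -big_split; apply: eq_bigr => k _; rewrite linearD scalerDr. Qed.

Lemma exp_partialZ N s c u :
  exp_partial A s (c *: u) N = c *: exp_partial A s u N.
Proof.
rewrite !exp_partialE scaler_sumr; apply: eq_bigr => k _.
by rewrite linearZ /= !scalerA mulrC.
Qed.

Lemma exp_partial_sum N s I (r : seq I) (P : pred I) (F : I -> {poly R}) :
  exp_partial A s (\sum_(i <- r | P i) F i) N =
  \sum_(i <- r | P i) exp_partial A s (F i) N.
Proof.
rewrite exp_partialE exchange_big /=; apply: eq_bigr => k _.
by rewrite linear_sum scaler_sumr.
Qed.

Section Nilpotent.
Variables (N : nat) (u : {poly R}).
Hypothesis iterN_eq0 : iter N A u = 0.

Lemma exp_partial_widen s M : (N <= M)%N ->
  exp_partial A s u M = exp_partial A s u N.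
Proof.
move=> leNM; rewrite !exp_partialE.
rewrite -!(big_mkord xpredT (fun k => exp_coeff s k *: iter k A u)).
rewrite (big_cat_nat (leq0n N) leNM) /= [X in _ + X]big_nat_cond.
rewrite [X in _ + X]big1 ?addr0 // => k /andP[/andP[leNk _] _].
by rewrite (iter_eq0_ge iterN_eq0 leNk) scaler0.
Qed.

Lemma exp_partial0 : exp_partial A 0 u N = u.
Proof.
case: N iterN_eq0 => [/= -> | n _]; first by rewrite exp_partialE big_ord0.
rewrite exp_partialE big_ord_recl /exp_coeff /= expr0 fact0 divr1 scale1r big1 ?addr0 //.
by move=> k _; rewrite expr0n /= mul0r scale0r.
Qed.

Lemma exp_partial_addr s t :
  exp_partial A s (exp_partial A t u N) N = exp_partial A (s + t) u N.
Proof.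
pose G k j := (exp_coeff s k * exp_coeff t j) *: iter (k + j) A u.
transitivity (\sum_(0 <= k < N) \sum_(0 <= j < N - k) G k j).
  rewrite exp_partialE big_mkord; apply: eq_bigr => k _.
  rewrite linear_sum scaler_sumr big_mkord (big_ord_widen _ (G k) (leq_subr k N)).
  rewrite [RHS]big_mkcond /=; apply: eq_bigr => j _; rewrite linearZ /= scalerA -iterD.
  case: ltnP => // lej.
  by rewrite (iter_eq0_ge iterN_eq0) ?scaler0 // -leq_subLR.
rewrite -big_nat_triangle exp_partialE big_mkord; apply: eq_bigr => n _.
rewrite exp_coeffD scaler_suml big_mkord; apply: eq_bigr => i _.
by rewrite /G subnKC // -ltnS.
Qed.

Lemma op_exp_series_nilpotent s :
  op_exp_series A s u (exp_partial A s u N).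
Proof.
move=> i; apply: cvg_near_cst.
by exists N => // M /= leNM; rewrite exp_partial_widen.
Qed.

End Nilpotent.

Lemma op_exp_seriesD s u v h1 h2 :
  op_exp_series A s u h1 -> op_exp_series A s v h2 ->
  op_exp_series A s (u + v) (h1 + h2).
Proof.
move=> cvg_u cvg_v i; rewrite coefD.
under eq_fun do rewrite exp_partialD coefD.
exact: cvgD.
Qed.

Lemma op_exp_seriesZ s c u h :
  op_exp_series A s u h -> op_exp_series A s (c *: u) (c *: h).
Proof.
move=> cvg_u i; rewrite coefZ; under eq_fun do rewrite exp_partialZ coefZ.
exact: cvgMl_tmp.
Qed.

Lemma op_exp_series_sum s I (r : seq I) (P : pred I) (F H : I -> {poly R}) :
  (forall i, P i -> op_exp_series A s (F i) (H i)) ->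
  op_exp_series A s (\sum_(i <- r | P i) F i) (\sum_(i <- r | P i) H i).
Proof.
apply: (big_ind2 (op_exp_series A s)) => [|u1 u2 h1 h2]; last exact: op_exp_seriesD.
have := op_exp_series_nilpotent (u := 0) (N := 0) (s := s) (erefl _).
by rewrite exp_partialE big_ord0.
Qed.

Lemma op_exp_series_eigen s c u : A u = c *: u ->
  op_exp_series A s u (expR (s * c) *: u).
Proof.
move=> Au i; rewrite coefZ.
have iterA k : iter k A u = c ^+ k *: u.
  by elim: k => [|k IH] /=; rewrite ?scale1r // IH linearZ /= Au scalerA exprS mulrC.
have coef_exp M : (exp_partial A s u M)`_i = series (exp_coeff (s * c)) M * u`_i.
  rewrite exp_partialE coef_sum /series /= big_mkord mulr_suml; apply: eq_bigr => k _.
  by rewrite iterA scalerA !coefZ /exp_coeff /= exprMn; ring.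
rewrite (funext coef_exp).
by apply: cvgMr_tmp; exact: is_cvg_series_exp_coeff.
Qed.

Section Intertwining.
Variables (S : {linear {poly R} -> {poly R}}) (l : R).
Hypothesis AS : forall u, A (S u) = l *: S (A u).

Lemma iter_intertwine k u : iter k A (S u) = l ^+ k *: S (iter k A u).
Proof.
elim: k => [|k IH] /=; first by rewrite scale1r.
by rewrite IH linearZ /= AS scalerA exprSr.
Qed.

Lemma exp_partial_intertwine N s u :
  exp_partial A s (S u) N = S (exp_partial A (l * s) u N).
Proof.
rewrite !exp_partialE linear_sum; apply: eq_bigr => k _.
by rewrite iter_intertwine !linearZ /= scalerA /exp_coeff /= exprMn mulrA.
Qed.

End Intertwining.

Section Commutator.
Variable B : {linear {poly R} -> {poly R}}.
Hypothesis BA : forall u, B (A u) = A (B u) - A u.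

Lemma iter_commutator k u : B (iter k A u) = iter k A (B u) - k%:R *: iter k A u.
Proof.
elim: k => [|k IH] /=; first by rewrite scale0r subr0.
rewrite BA IH linearB linearZ /= -addrA -opprD -[X in _ - (_ + X)]scale1r.
by rewrite -scalerDl -natr1.
Qed.

Lemma exp_partial_commutator N s u : iter N A u = 0 ->
  B (exp_partial A s u N) = exp_partial A s (B u) N - s *: A (exp_partial A s u N).
Proof.
move=> iterN_eq0; rewrite !exp_partialE linear_sum /=.
under eq_bigr do rewrite linearZ /= iter_commutator scalerBr scalerA.
rewrite sumrB; congr (_ - _).
rewrite linear_sum scaler_sumr.
case: N iterN_eq0 => [|N] iterN_eq0; first by rewrite !big_ord0.
rewrite big_ord_recl /= mulr0 scale0r add0r big_ord_recr /=.
rewrite linearZ /= -/(iter N.+1 A u) iterN_eq0 !scaler0 addr0.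
apply: eq_bigr => k _; rewrite linearZ /= scalerA; congr (_ *: _).
rewrite /exp_coeff /= factS natrM exprS /bump /= add1n.
by field; rewrite fact_natr_neq0 nat1r pnatr_eq0.
Qed.

End Commutator.

End ExpPartial.

Section DeltaOperators.
Variable R : realType.
Implicit Types (th om l s : R) (u : {poly R}).

Definition euler u : {poly R} := 'X * u^`().

Fact euler_is_linear : linear euler.
Proof. by move=> c u v; rewrite /euler linearP mulrDr scalerAr. Qed.
HB.instance Definition _ :=
  GRing.isLinear.Build R {poly R} {poly R} _ euler euler_is_linear.

Fact Delta_th_is_linear th : linear (Delta_th th).
Proof.
move=> c u v; rewrite /Delta_th !linearP /=.
by rewrite mulrDr -scalerAr scalerA [c * th]mulrC -scalerA addrACA.
Qed.
HB.instance Definition _ th :=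
  GRing.isLinear.Build R {poly R} {poly R} _ (Delta_th th) (Delta_th_is_linear th).

Lemma Delta_thomE th om u : Delta_thom th om u = om *: euler u + Delta_th th u.
Proof.
rewrite /Delta_thom /Delta_th /euler mulrDl addrA; congr (_ + _).
by rewrite mul_polyC addrC -scalerAl.
Qed.

Fact Delta_thom_is_linear th om : linear (Delta_thom th om).
Proof.
move=> c u v; rewrite !Delta_thomE [euler _]linearP [Delta_th _ _]linearP /=.
by rewrite !scalerDr scalerA [om * c]mulrC -scalerA addrACA.
Qed.
HB.instance Definition _ th om := GRing.isLinear.Build R {poly R} {poly R} _
  (Delta_thom th om) (Delta_thom_is_linear th om).

Lemma Delta_thom0 th : Delta_thom th 0 = Delta_th th.
Proof. by apply/funext => u; rewrite Delta_thomE scale0r add0r. Qed.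

Lemma size_Delta_th th u m : (size u <= m.+1)%N -> (size (Delta_th th u) <= m)%N.
Proof.
move=> /leq_sizeP u_eq0; apply/leq_sizeP => j le_mj.
rewrite /Delta_th coefD coefZ coef_deriv coefXM (u_eq0 j.+1) // mul0rn mulr0 add0r.
by case: j le_mj => [|j] //= le_mj; rewrite !coef_deriv (u_eq0 j.+2) ?mul0rn.
Qed.

Lemma iter_Delta_th_eq0 th u k : (size u <= k)%N -> iter k (Delta_th th) u = 0.
Proof.
elim: k u => [|k IH] u le_uk; first by apply/eqP; rewrite -size_poly_leq0.
by rewrite iterSr IH // size_Delta_th.
Qed.

Lemma size_exp_partial_Delta_th th s u N :
  (size (exp_partial (Delta_th th) s u N) <= size u)%N.
Proof.
have size_iter k : (size (iter k (Delta_th th) u) <= size u)%N.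
  elim: k => //= k IH; apply: size_Delta_th; exact: leq_trans IH _.
rewrite exp_partialE; elim/big_ind: _ => [|p q le_p le_q|k _].
- by rewrite size_poly0.
- by apply: leq_trans (size_polyD _ _) _; rewrite geq_max le_p le_q.
- exact: leq_trans (size_scale_leq _ _) (size_iter k).
Qed.

Lemma euler_Delta_th th u :
  euler (Delta_th th u) = Delta_th th (euler u) - Delta_th th u.
Proof.
rewrite /euler /Delta_th /derivn /= !(derivD, derivZ, derivM, derivX, derivC).
by rewrite -!mul_polyC; ring.
Qed.

Lemma Delta_th_comp_scale th l u :
  Delta_th th (u \Po (l *: 'X)) = l *: (Delta_th th u \Po (l *: 'X)).
Proof.
rewrite /Delta_th /derivn /= !deriv_comp !derivM !deriv_comp !derivZ derivX.
rewrite comp_polyD comp_polyZ comp_polyM comp_polyX ?(derivZ, derivC, derivX).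
by rewrite -!mul_polyC; ring.
Qed.

Lemma euler_Xn m : euler 'X^m = m%:R *: 'X^m.
Proof.
rewrite /euler derivXn scaler_nat; case: m => [|m]; first by rewrite !mulr0n mulr0.
by rewrite mulrnAr -exprS.
Qed.

Section Eigenvectors.
Variables (th om s : R) (N : nat).
Hypothesis om_s : om * s = 1.

Lemma Delta_thom_exp_partial u : (size u <= N)%N ->
  Delta_thom th om (exp_partial (Delta_th th) s u N) =
  om *: exp_partial (Delta_th th) s (euler u) N.
Proof.
move=> le_uN; rewrite Delta_thomE (exp_partial_commutator (euler_Delta_th th)).
  by rewrite scalerBr scalerA om_s scale1r subrK.
exact: iter_Delta_th_eq0.
Qed.

Lemma Delta_thom_eigen m : (m < N)%N ->
  Delta_thom th om (exp_partial (Delta_th th) s 'X^m N) =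
  (om * m%:R) *: exp_partial (Delta_th th) s 'X^m N.
Proof.
move=> lt_mN; rewrite Delta_thom_exp_partial ?size_polyXn //.
by rewrite euler_Xn exp_partialZ scalerA.
Qed.

End Eigenvectors.
End DeltaOperators.

Theorem lemma1 (R : realType) (th om a : R) (hth : 0 <= th) (f : {poly R}) :
  exists h : {poly R},
    op_exp_series (Delta_th th) (expcoef om a) f h /\
    op_exp_series (Delta_thom th om) a f (h \Po (expR (a * om) *: 'X)).
Proof.
pose N := size f.
have f_nil : iter N (Delta_th th) f = 0 by exact: iter_Delta_th_eq0.
exists (exp_partial (Delta_th th) (expcoef om a) f N).
split; first exact: op_exp_series_nilpotent.
rewrite /expcoef; case: eqVneq => [-> | om_neq0].
  rewrite mulr0 expR0 scale1r comp_polyXr Delta_thom0.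
  exact: op_exp_series_nilpotent.
set s := om^-1; set l := expR (a * om).
have om_s : om * s = 1 by rewrite mulfV.
pose g := exp_partial (Delta_th th) (- s) f N.
have le_gN : (size g <= N)%N := size_exp_partial_Delta_th _ _ _ _.
pose e m := exp_partial (Delta_th th) s 'X^m N.
have g_expand : g = \sum_(m < size g) g`_m *: 'X^m by rewrite -poly_def coefK.
have f_expand : f = \sum_(m < size g) g`_m *: e m.
  have -> : f = exp_partial (Delta_th th) s g N.
    by rewrite exp_partial_addr // subrr exp_partial0.
  by rewrite {1}g_expand exp_partial_sum; apply: eq_bigr => m _; rewrite exp_partialZ.
have h_expand : exp_partial (Delta_th th) (s * (l - 1)) f N \Po (l *: 'X) =
    \sum_(m < size g) g`_m *: (expR (a * (om * m%:R)) *: e m).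
  rewrite mulrBr mulr1 [s * l]mulrC -exp_partial_addr // -/g.
  rewrite -(exp_partial_intertwine (S := comp_poly (l *: 'X)) (Delta_th_comp_scale th l)).
  rewrite {1}g_expand linear_sum exp_partial_sum; apply: eq_bigr => m _.
  by rewrite linearZ /= rmorphXn /= comp_polyX exprZn !exp_partialZ mulrA expRM_natr.
rewrite h_expand f_expand; apply: op_exp_series_sum => m _.
apply: op_exp_seriesZ; apply: op_exp_series_eigen.
apply: Delta_thom_eigen => //; exact: leq_trans (ltn_ord m) le_gN.
Qed.
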